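(* For each of the rules (N1)–(N4), (P1)–(P4) below, if a rule reduces a dynamic implication $\varGamma\Rightarrow\varPhi$ to implications $\varGamma_i\Rightarrow\varPhi_i$ ($1\le i\le n$) and $\varGamma_i\vDash\varPhi_i$ for all $i$, then $\varGamma\vDash\varPhi$. Consequently, if $\varGamma\vdash_{\mathrm{dyn}}\varPhi$ then $\varGamma\vDash\varPhi$.
   Context: Assignments, literals, substitutions ($\sigma(\top)=\top$, $\sigma(\overline l)=\overline{\sigma(l)}$; finite if almost everywhere identity on variables) and $I\circ\sigma$ (with $(I\circ\sigma)(x)=1$ iff $I\vDash\sigma(x)$) as usual. Static constraints form a family with: a constraint for each literal; a negation $\overline C$ ($I\vDash\overline C$ iff $I\not\vDash C$); reducts $C[\sigma]$ ($I\vDash C[\sigma]$ iff $I\circ\sigma\vDash C$); and a conflict-detection predicate $\vdash_\bot F$ on finite sets of static constraints which is sound ($\vdash_\bot F$ implies $F$ unsatisfiable), holds whenever $F$ contains $\bot$ or both $C$ and $\overline C$, and is monotone under supersets. Program items: $\langle\sigma\rangle$ ($J=I\circ\sigma$), $T?$ ($I\vDash T$ and $J=I$), $\varepsilon_1\sqcup\varepsilon_2$ ($I\otimes J\vDash\varepsilon_1$ or $I\otimes J\vDash\varepsilon_2$), $\mathrm{if}\ T\ \mathrm{then}\ \varepsilon_1\parallel\varepsilon_0$ (as $\varepsilon_1$ if $I\vDash T$, as $\varepsilon_0$ otherwise); programs are finite lists of items with sequential composition semantics ($[\,]$ is the empty program). A dynamic constraint $\varepsilon.C$ ($\varepsilon$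 program, $C$ static) holds at $I$ iff $J\vDash C$ whenever $I\otimes J\vDash\varepsilon$; dynamic formulas are finite sets of dynamic constraints interpreted conjunctively. For a program $\delta$: $\delta.(\varepsilon.C)=(\delta\varepsilon).C$ and $\delta.\varGamma=\{\delta.\varPhi:\varPhi\in\varGamma\}$. A static constraint $T$ is identified with $[\,].T$. For a dynamic constraint $\varPhi$ and finite substitution $\sigma$, $\varPhi[\sigma]$ denotes its reduct, a dynamic constraint satisfying $I\vDash\varPhi[\sigma]$ iff $I\circ\sigma\vDash\varPhi$ for all $I$, with $([\,].C)[\sigma]=[\,].C[\sigma]$; $\varDelta[\sigma]=\{\varPhi[\sigma]:\varPhi\in\varDelta\}$. A dynamic implication $\varGamma\Rightarrow\varPhi$ has $\varGamma$ a dynamic formula and $\varPhi$ a dynamic constraint. Rules ($\varGamma,\varDelta$ dynamic formulas, $\varPhi$ dynamic constraint, $T$ static, $\varepsilon_i$ programs): (N1) $\varGamma\Rightarrow\langle\sigma\rangle.\varPhi$ reduces to $\varGamma\Rightarrow\varPhi[\sigma]$; (N2) $\varGamma\Rightarrow(\varepsilon_1\sqcup\varepsilon_2).\varPhi$ reduces to $\varGamma\Rightarrow\varepsilon_1.\varPhi$ and $\varGamma\Rightarrow\varepsilon_2.\varPhi$; (N3) $\varGamma\Rightarrow T?.\varPhi$ reduces to $\varGamma\cup\{T\}\Rightarrow\varPhi$; (N4) $\varGamma\Rightarrow(\mathrm{if}\ T\ \mathrm{then}\ \varepsilon_1\parallel\varepsilon_0).\varPhi$ reduces to $\varGamma\cup\{T\}\Rightarrow\varepsilon_1.\varPhi$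 and $\varGamma\cup\{\overline T\}\Rightarrow\varepsilon_0.\varPhi$; (P1) $\varGamma\cup\langle\sigma\rangle.\varDelta\Rightarrow\varPhi$ reduces to $\varGamma\cup\varDelta[\sigma]\Rightarrow\varPhi$; (P2) $\varGamma\cup(\varepsilon_1\sqcup\varepsilon_2).\varDelta\Rightarrow\varPhi$ reduces to $\varGamma\cup\varepsilon_1.\varDelta\cup\varepsilon_2.\varDelta\Rightarrow\varPhi$; (P3) $\varGamma\cup T?.\varDelta\Rightarrow\varPhi$ reduces to $\varGamma\cup\varDelta\cup\{T\}\Rightarrow\varPhi$ and $\varGamma\cup\{\overline T\}\Rightarrow\varPhi$; (P4) $\varGamma\cup(\mathrm{if}\ T\ \mathrm{then}\ \varepsilon_1\parallel\varepsilon_0).\varDelta\Rightarrow\varPhi$ reduces to $\varGamma\cup\varepsilon_1.\varDelta\cup\{T\}\Rightarrow\varPhi$ and $\varGamma\cup\varepsilon_0.\varDelta\cup\{\overline T\}\Rightarrow\varPhi$. We write $\varGamma\vdash_{\mathrm{dyn}}\varPhi$ if, by finitely many applications of these rules, $\varGamma\Rightarrow\varPhi$ can be reduced to implications $[\,].F_i\Rightarrow[\,].C_i$ ($1\le i\le n$) with all constraints having empty context ($F_i$ static formulas, $C_i$ static constraints) such that $\vdash_\bot F_i\cup\{\overline{C_i}\}$ for every $i$. *)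

From Stdlib Require Import List.
Import ListNotations.
Set Implicit Arguments.

Inductive lit (V : Type) : Type :=
| LTop : lit V
| LBot : lit V
| LPos : V -> lit V
| LNeg : V -> lit V.
Arguments LTop {V}. Arguments LBot {V}.

Definition lneg {V} (l : lit V) : lit V :=
  match l with LTop => LBot | LBot => LTop | LPos x => LNeg x | LNeg x => LPos x end.

Definition assn (V : Type) := V -> bool.

Definition lsat {V} (I : assn V) (l : lit V) : bool :=
  match l with LTop => true | LBot => false | LPos x => I x | LNeg x => negb (I x) end.

Record fsubst (V : Type) := {
  fs_map :> V -> lit V;
  fs_fin : exists dom : list V, forall x, ~ In x dom -> fs_map x = LPos x }.

Definition lsubst {V} (s : fsubst V) (l : lit V) : lit V :=
  match l with LTop => LTop | LBot => LBot | LPos x => s x | LNeg x => lneg (s x) end.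

Definition comp {V} (I : assn V) (s : fsubst V) : assn V := fun x => lsat I (s x).

(** * Abstract family of static constraints (with conflict detection).
    Finite sets of static constraints are represented as lists. *)
Record StaticFamily (V : Type) := {
  sc :> Type;
  ssat : assn V -> sc -> Prop;
  sclit : lit V -> sc;
  sclit_sat : forall I l, ssat I (sclit l) <-> lsat I l = true;
  scneg : sc -> sc;
  scneg_sat : forall I C, ssat I (scneg C) <-> ~ ssat I C;
  scred : sc -> fsubst V -> sc;
  scred_sat : forall I C s, ssat I (scred C s) <-> ssat (comp I s) C;
  conflict : list sc -> Prop;
  conflict_sound : forall F, conflict F -> ~ exists I, forall C, In C F -> ssat I C;
  conflict_bot : forall F, In (sclit LBot) F -> conflict F;
  conflict_compl : forall F C, In C F -> In (scneg C) F -> conflict F;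
  conflict_mono : forall F G, incl F G -> conflict F -> conflict G }.

Arguments ssat {V} s0 _ _.
Arguments scneg {V} s0 _.
Arguments scred {V} s0 _ _.
Arguments conflict {V} s0 _.

Section Dyn.
Variables (V : Type) (S : StaticFamily V).

Inductive item : Type :=
| ISub : fsubst V -> item
| ITest : S -> item
| IChoice : list item -> list item -> item
| IIf : S -> list item -> list item -> item.

Definition prog := list item.

Inductive exec_item : item -> assn V -> assn V -> Prop :=
| ExSub s I : exec_item (ISub s) I (comp I s)
| ExTest T I : ssat S I T -> exec_item (ITest T) I I
| ExChoiceL e1 e2 I J : exec e1 I J -> exec_item (IChoice e1 e2) I J
| ExChoiceR e1 e2 I J : exec e2 I J -> exec_item (IChoice e1 e2) I J
| ExIfT T e1 e0 I J : ssat S I T -> exec e1 I J -> exec_item (IIf T e1 e0) I J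
| ExIfF T e1 e0 I J : ~ ssat S I T -> exec e0 I J -> exec_item (IIf T e1 e0) I J
with exec : prog -> assn V -> assn V -> Prop :=
| ExNil I : exec [] I I
| ExCons it p I K J : exec_item it I K -> exec p K J -> exec (it :: p) I J.

Definition dcon := (prog * S)%type.
Definition dform := list dcon.

Definition dsat (I : assn V) (Phi : dcon) : Prop :=
  forall J, exec (fst Phi) I J -> ssat S J (snd Phi).

Definition dfsat (I : assn V) (G : dform) : Prop := forall Phi, In Phi G -> dsat I Phi.

Definition dentails (G : dform) (Phi : dcon) : Prop :=
  forall I, dfsat I G -> dsat I Phi.

Definition dpre (d : prog) (Phi : dcon) : dcon := (d ++ fst Phi, snd Phi).
Definition dpres (d : prog) (G : dform) : dform := map (dpre d) G.

Definition st (T : S) : dcon := ([], T).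

(** reduct of dynamic constraints: any operation with the stated properties *)
Record DynReduct := {
  dred : dcon -> fsubst V -> dcon;
  dred_sat : forall I Phi s, dsat I (dred Phi s) <-> dsat (comp I s) Phi;
  dred_empty : forall C s, dred ([], C) s = ([], scred S C s) }.

Variable R : DynReduct.

Definition dreds (G : dform) (s : fsubst V) : dform := map (fun Phi => dred R Phi s) G.

Definition same_set (G1 G2 : dform) : Prop := forall Phi, In Phi G1 <-> In Phi G2.

Definition dimpl := (dform * dcon)%type.

(** reduces c L : a single rule application reduces c to the implications in L.
    In the (P) rules the antecedent Gamma u delta.Delta is matched up to set equality. *)
Inductive reduces : dimpl -> list dimpl -> Prop :=
| N1 G s eps C :
    reduces (G, (ISub s :: eps, C)) [(G, dred R (eps, C) s)]
| N2 G e1 e2 eps C :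
    reduces (G, (IChoice e1 e2 :: eps, C)) [(G, (e1 ++ eps, C)); (G, (e2 ++ eps, C))]
| N3 G T eps C :
    reduces (G, (ITest T :: eps, C)) [(G ++ [st T], (eps, C))]
| N4 G T e1 e0 eps C :
    reduces (G, (IIf T e1 e0 :: eps, C))
      [(G ++ [st T], (e1 ++ eps, C)); (G ++ [st (scneg S T)], (e0 ++ eps, C))]
| P1 G0 G D s Phi :
    same_set G0 (G ++ dpres [ISub s] D) ->
    reduces (G0, Phi) [(G ++ dreds D s, Phi)]
| P2 G0 G D e1 e2 Phi :
    same_set G0 (G ++ dpres [IChoice e1 e2] D) ->
    reduces (G0, Phi) [(G ++ dpres e1 D ++ dpres e2 D, Phi)]
| P3 G0 G D T Phi :
    same_set G0 (G ++ dpres [ITest T] D) ->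
    reduces (G0, Phi) [(G ++ D ++ [st T], Phi); (G ++ [st (scneg S T)], Phi)]
| P4 G0 G D T e1 e0 Phi :
    same_set G0 (G ++ dpres [IIf T e1 e0] D) ->
    reduces (G0, Phi)
      [(G ++ dpres e1 D ++ [st T], Phi); (G ++ dpres e0 D ++ [st (scneg S T)], Phi)].

Inductive dyn_derivable : dimpl -> Prop :=
| DLeaf G C :
    (forall Phi, In Phi G -> fst Phi = []) ->
    conflict S (map snd G ++ [scneg S C]) ->
    dyn_derivable (G, ([], C))
| DStep c L :
    reduces c L -> (forall p, In p L -> dyn_derivable p) -> dyn_derivable c.

End Dyn.

(* Each rule is sound because the semantics of a program item can be read off
   its first step: [<s>] pre-composes the assignment with [s], a choice runs
   either branch, and a test or conditional splits on whether the (classical)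
   condition holds.  Prefixing a formula by a program thus means that the
   formula holds after every run of it, which makes the (P) rules the mirror
   images of the (N) rules.  Soundness of derivability then follows by
   induction, the leaves being sound because conflict detection is. *)

From Stdlib Require Import List Classical.
Import ListNotations.
Set Implicit Arguments.

Section Soundness.
Variables (V : Type) (S : StaticFamily V).

Lemma exec_nil_inv (I J : assn V) : exec (S:=S) [] I J -> J = I.
Proof. intro H; inversion H; reflexivity. Qed.

Lemma exec_app (p q : prog S) I J :
  exec (p ++ q) I J <-> exists K, exec p I K /\ exec q K J.
Proof.
  revert I; induction p as [|it p IH]; intro I; simpl; split.
  - intro H; exists I; split; [constructor | exact H].
  - intros [K [HI HK]]; apply exec_nil_inv in HI; subst; exact HK.
  - intro H; inversion H as [|it' pq I' K J' Hit Hpq]; subst.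
    apply IH in Hpq as [K' [H1 H2]].
    exists K'; split; [econstructor; eauto | exact H2].
  - intros [K [H1 H2]]; inversion H1; subst.
    econstructor; [eauto | apply IH; eauto].
Qed.

Lemma exec_single it (I J : assn V) : exec (S:=S) [it] I J <-> exec_item it I J.
Proof.
  split.
  - intro H; inversion H as [|it' nil I' K J' Hit Hnil]; subst.
    apply exec_nil_inv in Hnil; subst; exact Hit.
  - intro H; econstructor; [exact H | constructor].
Qed.

Lemma dsat_dpre (e : prog S) Phi I :
  dsat I (dpre e Phi) <-> forall K, exec e I K -> dsat K Phi.
Proof.
  unfold dsat, dpre; simpl; split.
  - intros H K HK J HJ; apply H, exec_app; eauto.
  - intros H J HJ; apply exec_app in HJ as [K [HK HJ]]; eapply H; eauto.
Qed.

Lemma dsat_cons it (eps : prog S) C I :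
  dsat I (it :: eps, C) <-> forall K, exec_item it I K -> dsat K (eps, C).
Proof.
  rewrite (dsat_dpre [it] (eps, C)).
  split; intros H K HK; apply H, exec_single, HK.
Qed.

Lemma dsat_st I (T : S) : dsat I (st S T) <-> ssat S I T.
Proof.
  unfold dsat, st; simpl; split.
  - intro H; apply H; constructor.
  - intros H J HJ; apply exec_nil_inv in HJ; subst; exact H.
Qed.

Lemma dfsat_app I (G1 G2 : dform S) : dfsat I (G1 ++ G2) <-> dfsat I G1 /\ dfsat I G2.
Proof.
  unfold dfsat; split.
  - intro H; split; intros; apply H, in_or_app; auto.
  - intros [H1 H2] Phi HP; apply in_app_or in HP as [HP | HP]; auto.
Qed.

Lemma dfsat_snoc_st I (G : dform S) T :
  dfsat I (G ++ [st S T]) <-> dfsat I G /\ ssat S I T.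
Proof.
  rewrite dfsat_app, <- dsat_st; unfold dfsat; simpl.
  split; intros [HG HT]; split; auto.
  - intros Phi [<- | []]; exact HT.
Qed.

Lemma dfsat_same_set I (G0 G : dform S) : same_set G0 G -> dfsat I G0 -> dfsat I G.
Proof. intros HG HI Phi HP; apply HI, HG, HP. Qed.

Lemma dfsat_dpres I (e : prog S) (D : dform S) :
  dfsat I (dpres e D) <-> forall K, exec e I K -> dfsat K D.
Proof.
  unfold dfsat, dpres; split.
  - intros H K HK Phi HP; apply (proj1 (dsat_dpre e Phi I)); auto using in_map.
  - intros H Phi HP; apply in_map_iff in HP as [Psi [<- HPsi]].
    apply dsat_dpre; intros K HK; apply H; auto.
Qed.

Lemma dfsat_dpres1 I it (D : dform S) :
  dfsat I (dpres [it] D) -> forall K, exec_item it I K -> dfsat K D.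
Proof. intros H K HK; apply (proj1 (dfsat_dpres I [it] D) H), exec_single, HK. Qed.

Lemma dentails_leaf (G : dform S) C :
  (forall Phi, In Phi G -> fst Phi = []) ->
  conflict S (map snd G ++ [scneg S C]) -> dentails G ([], C).
Proof.
  intros Hstatic Hconf I HI J HJ; simpl in HJ; apply exec_nil_inv in HJ; subst; simpl.
  apply NNPP; intro HC.
  apply (conflict_sound S _ Hconf); exists I; intros D HD.
  apply in_app_or in HD as [HD | [<- | []]].
  - apply in_map_iff in HD as [[p D'] [<- HD]]; simpl.
    specialize (Hstatic _ HD); simpl in Hstatic; subst.
    apply (HI _ HD); constructor.
  - apply scneg_sat, HC.
Qed.

Variable R : DynReduct S.

Lemma dfsat_dreds I (D : dform S) s : dfsat I (dreds R D s) <-> dfsat (comp I s) D.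
Proof.
  unfold dfsat, dreds; split.
  - intros H Phi HP; apply (dred_sat R), H; exact (in_map _ _ _ HP).
  - intros H Phi HP; apply in_map_iff in HP as [Psi [<- HPsi]].
    apply (dred_sat R), H, HPsi.
Qed.

Lemma reduces_sound c L :
  reduces R c L -> (forall p, In p L -> dentails (fst p) (snd p)) ->
  dentails (fst c) (snd c).
Proof.
  intros Hr HL I HI.
  (* Name the entailments of the (one or two) premises [H1], [H2]; for the (P)
     rules split the antecedent into [G] and the prefixed formula [D]; for the
     (N) rules take the first step of a run of the leading item. *)
  destruct Hr; cbn [fst snd] in HI |- *;
    pose proof (HL _ (or_introl eq_refl)) as H1; cbn [fst snd] in H1;
    try (pose proof (HL _ (or_intror (or_introl eq_refl))) as H2; cbn [fst snd] in H2);
    try (apply (dfsat_same_set H), dfsat_app in HI as [HG HD]);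
    [ apply dsat_cons; intros K HK; inversion HK; subst .. | | | | ].
  - apply (dred_sat R), H1, HI.
  - apply (proj1 (dsat_dpre e1 (eps, C) I)); auto.
  - apply (proj1 (dsat_dpre e2 (eps, C) I)); auto.
  - apply H1, dfsat_snoc_st; auto.
  - apply (proj1 (dsat_dpre e1 (eps, C) I)); auto; apply H1, dfsat_snoc_st; auto.
  - apply (proj1 (dsat_dpre e0 (eps, C) I)); auto.
    apply H2, dfsat_snoc_st; rewrite scneg_sat; auto.
  - apply H1, dfsat_app; split; auto.
    apply dfsat_dreds; eapply dfsat_dpres1; eauto; constructor.
  - apply H1; rewrite !dfsat_app, !dfsat_dpres; repeat split; auto; intros K HK;
      (eapply dfsat_dpres1; [exact HD | ]); [apply ExChoiceL | apply ExChoiceR]; exact HK.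

  - destruct (classic (ssat S I T)) as [HT | HT].
    + apply H1; rewrite app_assoc, dfsat_snoc_st, dfsat_app; repeat split; auto.
      eapply dfsat_dpres1; eauto; constructor; auto.
    + apply H2, dfsat_snoc_st; rewrite scneg_sat; auto.
  - destruct (classic (ssat S I T)) as [HT | HT]; [apply H1 | apply H2];
      rewrite app_assoc, dfsat_snoc_st, dfsat_app, dfsat_dpres, ?scneg_sat;
      repeat split; auto; intros K HK; eapply dfsat_dpres1; eauto;
      [ apply ExIfT | apply ExIfF ]; auto.
Qed.

Lemma dyn_derivable_sound c : dyn_derivable R c -> dentails (fst c) (snd c).
Proof.
  induction 1 as [G C Hstatic Hconf | c L Hr _ IH].
  - exact (dentails_leaf Hstatic Hconf).
  - exact (reduces_sound Hr IH).
Qed.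

End Soundness.

Theorem mainTheorem4 (V : Type) (S : StaticFamily V) (R : DynReduct S) :
  (forall (G : dform S) (Phi : dcon S) (L : list (dimpl S)),
      reduces R (G, Phi) L ->
      (forall Gi Phii, In (Gi, Phii) L -> dentails Gi Phii) ->
      dentails G Phi)
  /\
  (forall (G : dform S) (Phi : dcon S),
      dyn_derivable R (G, Phi) -> dentails G Phi).
Proof.
  split.
  - intros G Phi L Hr HL.
    apply (reduces_sound Hr); intros [Gi Phii] Hi; exact (HL Gi Phii Hi).
  - intros G Phi H; exact (dyn_derivable_sound H).
Qed.
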